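(* Fix one of the two variants $\sharp\in\{\text{lumped},\text{exact}\}$ described in the context. Suppose $\partial_0I=\emptyset$, let $\vec X^m\in\underline V^h$ satisfy assumption $(\mathfrak A)$, and let $0<\Delta t_m<3\min_{\overline I}(\vec X^m\cdot\vec e_1)^2$. Then there exists a pair $(\delta\vec X^{m+1},\vec\kappa^{m+1})\in\underline V^h_\partial\times\underline V^h$ such that, with $\vec X^{m+1}=\vec X^m+\delta\vec X^{m+1}$, $$\Big(\vec X^m\cdot\vec e_1\,\tfrac{\vec X^{m+1}-\vec X^m}{\Delta t_m},\vec\chi\,|\vec X^m_\rho|\Big)_\sharp=\Big((\vec X^m\cdot\vec e_1)\vec\kappa^{m+1},\vec\chi\,|\vec X^m_\rho|\Big)_\sharp\quad\forall\,\vec\chi\in\underline V^h,$$ $$\Big((\vec X^m\cdot\vec e_1)\vec\kappa^{m+1},\vec\eta\,|\vec X^m_\rho|\Big)_\sharp+\big(\vec\eta\cdot\vec e_1,|\vec X^{m+1}_\rho|\big)+\Big((\vec X^m\cdot\vec e_1)\vec X^{m+1}_\rho,\vec\eta_\rho|\vec X^m_\rho|^{-1}\Big)$$ $$=-\sum_{p\in\partial_1I}\widehat\varrho^{(p)}(\vec X^m(p)\cdot\vec e_1)\,\vec\eta(p)\cdot\vec e_2-\sum_{p\in\partial_2I}\Big(\big([\widehat\varrho^{(p)}]_+\vec X^{m+1}(p)+[\widehat\varrho^{(p)}]_-\vec X^m(p)\big)\cdot\vec e_1\Big)\,\vec\eta(p)\cdot\vec e_1\quad\forall\,\vec\eta\in\underline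 V^h_\partial .$$
   Context: Setup. $\vec e_1=(1,0)^T$, $\vec e_2=(0,1)^T$; ''$\cdot$'' is the Euclidean inner product; $[r]_+=\max\{r,0\}$, $[r]_-=-\max\{-r,0\}$. $I$ is either the periodic interval $\mathbb R/\mathbb Z$ (with $\partial I=\emptyset$) or $I=(0,1)$ (with $\partial I=\{0,1\}$). $\partial I=\partial_DI\cup\partial_0I\cup\partial_1I\cup\partial_2I$ is a given disjoint partition, and $\widehat\varrho^{(p)}\in\mathbb R$, $p\in\{0,1\}$, are given constants with $|\widehat\varrho^{(p)}|\le1$. Let $J\ge3$, $h=1/J$, $q_j=jh$ ($j=0,\dots,J$; $q_0=q_J$ identified in the periodic case). $V^h$ is the space of continuous functions on $\overline I$ (periodic if $I=\mathbb R/\mathbb Z$) that are affine on each $[q_{j-1},q_j]$; $\underline V^h=[V^h]^2$; $\underline V^h_\partial=\{\vec\eta\in\underline V^h:\vec\eta(\rho)\cdot\vec e_1=0\ \forall\rho\in\partial_0I;\ \vec\eta(\rho)\cdot\vec e_i=0\ \forall\rho\in\partial_iI,\ i=1,2;\ \vec\eta(\rho)=\vec0\ \forall\rho\in\partial_DI\}$. $(\cdot,\cdot)$ is the $L^2(I)$ inner product (with dot product for vector functions), and for piecewise continuous $f,g$ the mass-lumped product is $(f,g)^h=\tfrac h2\sum_{j=1}^J[(fg)(q_j^-)+(fg)(q_{j-1}^+)]$. Two variants: in the ''lumped'' variant $(\cdot,\cdot)_\sharp=(\cdot,\cdot)^h$; in the ''exact'' variant $(\cdot,\cdot)_\sharp=(\cdot,\cdot)$.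 Assumption $(\mathfrak A)$: $|\vec X^m_\rho|>0$ a.e. on $I$ and $\vec X^m(\rho)\cdot\vec e_1>0$ for all $\rho\in\overline I\setminus\partial_0I$. *)

From Stdlib Require Import Reals Lra Lia ClassicalEpsilon.
Open Scope R_scope.

Definition vec := (R * R)%type.
Definition vadd (u v : vec) : vec := (fst u + fst v, snd u + snd v).
Definition vsub (u v : vec) : vec := (fst u - fst v, snd u - snd v).
Definition vscal (a : R) (u : vec) : vec := (a * fst u, a * snd u).
Definition vdot (u v : vec) : R := fst u * fst v + snd u * snd v.
Definition vnorm (u : vec) : R := sqrt (vdot u u).
Definition e1 : vec := (1, 0).
Definition e2 : vec := (0, 1).

Definition rpos (r : R) : R := Rmax r 0.
Definition rneg (r : R) : R := - Rmax (- r) 0.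

Definition hh (J : nat) : R := 1 / INR J.
Definition q (J j : nat) : R := INR j / INR J.

Fixpoint rsum (n : nat) (f : nat -> R) : R :=
  match n with
  | O => 0
  | S k => rsum k f + f (S k)
  end.

(* A function of V^h is given by its nodal values X 0, ..., X J
   (values at indices > J are irrelevant); in the periodic case X 0 = X J. *)
Definition inVh (per : bool) (J : nat) (X : nat -> vec) : Prop :=
  per = true -> X 0%nat = X J.

(* value of the piecewise affine function on element [q_{j-1}, q_j] (1 <= j <= J) *)
Definition interp (J : nat) (X : nat -> vec) (j : nat) (rho : R) : vec :=
  vadd (X (pred j))
       (vscal ((rho - q J (pred j)) / hh J) (vsub (X j) (X (pred j)))).

Definition deriv (J : nat) (X : nat -> vec) (j : nat) : vec :=
  vscal (1 / hh J) (vsub (X j) (X (pred j))).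

(* Riemann integral over [a,b] (the value, for Riemann-integrable f). *)
Definition Rint (f : R -> R) (a b : R) : R :=
  epsilon (inhabits 0)
    (fun v => exists pr : Riemann_integrable f a b, RiemannInt pr = v).

(* A piecewise continuous integrand is given elementwise: F j is the
   (continuous) restriction to the closed element [q_{j-1}, q_j]. *)
Definition ip_exact (J : nat) (F : nat -> R -> R) : R :=
  rsum J (fun j => Rint (F j) (q J (pred j)) (q J j)).

(* mass-lumped inner product (.,.)^h : one-sided limits q_j^- and q_{j-1}^+
   are the values of the elementwise continuous restrictions *)
Definition ip_lumped (J : nat) (F : nat -> R -> R) : R :=
  hh J / 2 * rsum J (fun j => F j (q J j) + F j (q J (pred j))).

Definition ip_sharp (lumped : bool) (J : nat) (F : nat -> R -> R) : R :=
  if lumped then ip_lumped J F else ip_exact J F.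

(* boundary points p in {0,1} are encoded by a bool: false = 0, true = 1 *)
Inductive bctype := BcD | Bc0 | Bc1 | Bc2.
Definition bnode (J : nat) (p : bool) : nat := if p then J else 0%nat.

(* p belongs to d_k I (only possible when I = (0,1), i.e. per = false) *)
Definition inbd (per : bool) (bc : bool -> bctype) (k : bctype) (p : bool) : Prop :=
  per = false /\ bc p = k.

Definition in_d0 (per : bool) (bc : bool -> bctype) (rho : R) : Prop :=
  exists p : bool, inbd per bc Bc0 p /\ rho = (if p then 1 else 0).

Definition inVhd (per : bool) (bc : bool -> bctype) (J : nat) (eta : nat -> vec) : Prop :=
  inVh per J eta /\
  forall p : bool,
    (inbd per bc Bc0 p -> vdot (eta (bnode J p)) e1 = 0) /\
    (inbd per bc Bc1 p -> vdot (eta (bnode J p)) e1 = 0) /\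
    (inbd per bc Bc2 p -> vdot (eta (bnode J p)) e2 = 0) /\
    (inbd per bc BcD p -> eta (bnode J p) = (0, 0)).

Definition assumptionA (per : bool) (bc : bool -> bctype) (J : nat) (X : nat -> vec) : Prop :=
  (forall j, (1 <= j <= J)%nat -> vnorm (deriv J X j) > 0) /\
  (forall j rho, (1 <= j <= J)%nat -> q J (pred j) <= rho <= q J j ->
     ~ in_d0 per bc rho -> vdot (interp J X j rho) e1 > 0).

Definition is_min_sq (J : nat) (X : nat -> vec) (m : R) : Prop :=
  (exists j rho, (1 <= j <= J)%nat /\ q J (pred j) <= rho <= q J j /\
     m = (vdot (interp J X j rho) e1) ^ 2) /\
  (forall j rho, (1 <= j <= J)%nat -> q J (pred j) <= rho <= q J j ->
     m <= (vdot (interp J X j rho) e1) ^ 2).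

Definition bsum (per : bool) (bc : bool -> bctype) (k : bctype) (g : bool -> R) : R :=
  (if per then 0 else
     (match bc false, k with
      | BcD, BcD | Bc0, Bc0 | Bc1, Bc1 | Bc2, Bc2 => g false | _, _ => 0 end) +
     (match bc true, k with
      | BcD, BcD | Bc0, Bc0 | Bc1, Bc1 | Bc2, Bc2 => g true | _, _ => 0 end)).

(* Eliminating kappa^{m+1} = dX / dt, the
   second equation says that dX in V^h_partial is a zero, against V^h_partial, of an operator G
   on nodal vectors.  G is Lipschitz, and it is strongly monotone: in the difference of two
   arguments the variation of |X^{m+1}_rho| is controlled by the stiffness term via Young's
   inequality, and what remains is absorbed by the mass term exactly when
   dt < 3 min (X^m . e1)^2.  A projected gradient step for G is then a contraction, and its
   fixed point solves the system. *)

From Stdlib Require Import Reals Lra Lia ClassicalEpsilon FunctionalExtensionality.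
From Coquelicot Require Import Coquelicot.
Open Scope R_scope.

Definition affine (f : R -> R) := exists c0 c1, forall x, f x = c0 + c1 * x.
Definition quadratic (f : R -> R) := exists c0 c1 c2, forall x, f x = c0 + c1 * x + c2 * x ^ 2.
Definition cubic (f : R -> R) :=
  exists c0 c1 c2 c3, forall x, f x = c0 + c1 * x + c2 * x ^ 2 + c3 * x ^ 3.

Lemma affine_ext f g : (forall x, f x = g x) -> affine g -> affine f.
Proof. intros H [a [b Hg]]; exists a, b; intro x; rewrite H, Hg; reflexivity. Qed.

Lemma cubic_ext f g : (forall x, f x = g x) -> cubic g -> cubic f.
Proof. intros H [a [b [c [d Hg]]]]; exists a, b, c, d; intro x; rewrite H, Hg; reflexivity. Qed.

Lemma affine_mulr f k : affine f -> affine (fun x => f x * k).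
Proof. intros [a [b Hf]]; exists (a * k), (b * k); intro x; rewrite Hf; ring. Qed.

Lemma affine_cubic f : affine f -> cubic f.
Proof. intros [a [b Hf]]; exists a, b, 0, 0; intro x; rewrite Hf; ring. Qed.

Lemma affine_mul f g : affine f -> affine g -> quadratic (fun x => f x * g x).
Proof.
  intros [a [b Hf]] [c [d Hg]]; exists (a * c), (a * d + b * c), (b * d).
  intro x; rewrite Hf, Hg; ring.
Qed.

Lemma quadratic_add f g : quadratic f -> quadratic g -> quadratic (fun x => f x + g x).
Proof.
  intros [a [b [c Hf]]] [a' [b' [c' Hg]]]; exists (a + a'), (b + b'), (c + c').
  intro x; rewrite Hf, Hg; ring.
Qed.

Lemma quadratic_mul_affine f g : quadratic f -> affine g -> cubic (fun x => f x * g x).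
Proof.
  intros [a [b [c Hf]]] [d [e Hg]]; exists (a * d), (a * e + b * d), (b * e + c * d), (c * e).
  intro x; rewrite Hf, Hg; ring.
Qed.

Lemma Rint_unique f a b v : is_RInt f a b v -> Rint f a b = v.
Proof.
  intros Hv.
  pose (pr := ex_RInt_Reals_0 f a b (ex_intro _ v Hv)).
  assert (Hpr : RiemannInt pr = v) by (rewrite <- RInt_Reals; exact (is_RInt_unique _ _ _ _ Hv)).
  unfold Rint.
  destruct (epsilon_spec (inhabits 0)
              (fun v => exists pr : Riemann_integrable f a b, RiemannInt pr = v)
              (ex_intro _ v (ex_intro _ pr Hpr))) as [pr' <-].
  rewrite (RiemannInt_P5 pr' pr); exact Hpr.
Qed.

Lemma Rint_simpson f a b : cubic f -> Rint f a b = (b - a) / 6 * (f a + 4 * f ((a + b) / 2) + f b).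
Proof.
  intros [c0 [c1 [c2 [c3 Hf]]]].
  set (F := fun x => c0 * x + c1 * x ^ 2 / 2 + c2 * x ^ 3 / 3 + c3 * x ^ 4 / 4).
  replace f with (fun x => c0 + c1 * x + c2 * x ^ 2 + c3 * x ^ 3)
    by (apply functional_extensionality; intro; now rewrite Hf).
  rewrite (Rint_unique _ a b (F b - F a)); [unfold F; field|].
  apply (is_RInt_derive F).
  - intros x _; unfold F; auto_derive; trivial; field.
  - intros x _; apply (ex_derive_continuous (fun y => c0 + c1 * y + c2 * y ^ 2 + c3 * y ^ 3)).
    auto_derive; trivial.
Qed.

Lemma rsum_ext n f g : (forall j, (1 <= j <= n)%nat -> f j = g j) -> rsum n f = rsum n g.
Proof.
  induction n; intros H; simpl; [reflexivity|].
  rewrite IHn by (intros; apply H; lia).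
  rewrite H by lia; reflexivity.
Qed.

Lemma rsum_add n f g : rsum n (fun j => f j + g j) = rsum n f + rsum n g.
Proof. induction n; simpl; [ring | rewrite IHn; ring]. Qed.

Lemma rsum_sub n f g : rsum n (fun j => f j - g j) = rsum n f - rsum n g.
Proof. induction n; simpl; [ring | rewrite IHn; ring]. Qed.

Lemma rsum_scal n c f : rsum n (fun j => c * f j) = c * rsum n f.
Proof. induction n; simpl; [ring | rewrite IHn; ring]. Qed.

Lemma rsum_le n f g : (forall j, (1 <= j <= n)%nat -> f j <= g j) -> rsum n f <= rsum n g.
Proof.
  induction n; intros H; simpl; [lra|].
  assert (rsum n f <= rsum n g) by (apply IHn; intros; apply H; lia).
  assert (f (S n) <= g (S n)) by (apply H; lia).
  lra.
Qed.

Lemma rsum_const0 n : rsum n (fun _ => 0) = 0.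
Proof. induction n; simpl; [reflexivity | rewrite IHn; ring]. Qed.

Lemma rsum_abs n f : Rabs (rsum n f) <= rsum n (fun j => Rabs (f j)).
Proof.
  induction n; simpl; [rewrite Rabs_R0; lra|].
  eapply Rle_trans; [apply Rabs_triang | lra].
Qed.

Definition rsum0 (n : nat) (f : nat -> R) : R := f O + rsum n f.

Lemma rsum0_S n f : rsum0 (S n) f = rsum0 n f + f (S n).
Proof. unfold rsum0; simpl; ring. Qed.

Lemma rsum0_ext n f g : (forall k, (k <= n)%nat -> f k = g k) -> rsum0 n f = rsum0 n g.
Proof.
  intros H; unfold rsum0.
  rewrite (rsum_ext n f g) by (intros; apply H; lia).
  rewrite H by lia; reflexivity.
Qed.

Lemma rsum0_add n f g : rsum0 n (fun k => f k + g k) = rsum0 n f + rsum0 n g.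
Proof. unfold rsum0; rewrite rsum_add; ring. Qed.

Lemma rsum0_sub n f g : rsum0 n (fun k => f k - g k) = rsum0 n f - rsum0 n g.
Proof. unfold rsum0; rewrite rsum_sub; ring. Qed.

Lemma rsum0_scal n c f : rsum0 n (fun k => c * f k) = c * rsum0 n f.
Proof. unfold rsum0; rewrite rsum_scal; ring. Qed.

Lemma rsum0_le n f g : (forall k, (k <= n)%nat -> f k <= g k) -> rsum0 n f <= rsum0 n g.
Proof.
  intros H; unfold rsum0.
  assert (f O <= g O) by (apply H; lia).
  assert (rsum n f <= rsum n g) by (apply rsum_le; intros; apply H; lia).
  lra.
Qed.

Lemma rsum0_const n c : rsum0 n (fun _ => c) = INR (S n) * c.
Proof. induction n; [unfold rsum0; simpl; ring | rewrite rsum0_S, IHn, (S_INR (S n)); ring]. Qed.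

Lemma rsum0_nonneg n f : (forall k, (k <= n)%nat -> 0 <= f k) -> 0 <= rsum0 n f.
Proof.
  intros H; rewrite <- (Rmult_0_r (INR (S n))), <- rsum0_const.
  apply rsum0_le; exact H.
Qed.

Lemma rsum0_ge_term n f k :
  (forall i, (i <= n)%nat -> 0 <= f i) -> (k <= n)%nat -> f k <= rsum0 n f.
Proof.
  induction n; intros H Hk.
  - replace k with O by lia; unfold rsum0; simpl; lra.
  - rewrite rsum0_S.
    assert (0 <= f (S n)) by (apply H; lia).
    destruct (Nat.eq_dec k (S n)) as [->|Hne].
    + assert (0 <= rsum0 n f) by (apply rsum0_nonneg; intros; apply H; lia). lra.
    + assert (f k <= rsum0 n f) by (apply IHn; [intros; apply H | ]; lia). lra.
Qed.

Lemma rsum0_as_rsum n g : rsum0 n g = rsum (S n) (fun j => g (pred j)).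
Proof. induction n; unfold rsum0 in *; simpl in *; [ring | rewrite <- IHn; simpl; ring]. Qed.

Lemma rsum0_le_elements n f : (1 <= n)%nat -> (forall k, 0 <= f k) ->
  rsum0 n f <= rsum n (fun j => f (pred j) + f j).
Proof.
  intros Hn Hf; induction n as [|n IH]; [lia|].
  destruct n as [|n]; [unfold rsum0; simpl; lra|].
  rewrite rsum0_S.
  change (rsum (S (S n)) (fun j => f (pred j) + f j))
    with (rsum (S n) (fun j => f (pred j) + f j) + (f (S n) + f (S (S n)))).
  assert (rsum0 (S n) f <= rsum (S n) (fun j => f (pred j) + f j)) by (apply IH; lia).
  specialize (Hf (S n)); lra.
Qed.

Lemma exists_pos_lower_bound n (g : nat -> R) : (forall j, (1 <= j <= n)%nat -> 0 < g j) ->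
  exists c, 0 < c /\ forall j, (1 <= j <= n)%nat -> c <= g j.
Proof.
  induction n; intros H; [exists 1; split; [lra | intros; lia]|].
  destruct IHn as [c [Hc Hcj]]; [intros; apply H; lia|].
  exists (Rmin c (g (S n))); split; [apply Rmin_glb_lt; [exact Hc | apply H; lia]|].
  intros j Hj; destruct (Nat.eq_dec j (S n)) as [->|Hne]; [apply Rmin_r|].
  eapply Rle_trans; [apply Rmin_l | apply Hcj; lia].
Qed.

Definition vmid (u v : vec) : vec := vscal (1 / 2) (vadd u v).

Lemma vdot_add_l u v w : vdot (vadd u v) w = vdot u w + vdot v w.
Proof. unfold vdot, vadd; simpl; ring. Qed.

Lemma vdot0l w : vdot (0, 0) w = 0.
Proof. unfold vdot; simpl; ring. Qed.

Lemma vdot_self_nonneg v : 0 <= vdot v v.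
Proof. unfold vdot; nra. Qed.

Lemma vnorm_nonneg v : 0 <= vnorm v.
Proof. apply sqrt_pos. Qed.

Lemma vnorm_sq v : vnorm v ^ 2 = vdot v v.
Proof. unfold vnorm; simpl; rewrite Rmult_1_r; apply sqrt_sqrt, vdot_self_nonneg. Qed.

Lemma vnorm_scal c u : vnorm (vscal c u) = Rabs c * vnorm u.
Proof.
  unfold vnorm; rewrite <- sqrt_Rsqr_abs, <- sqrt_mult_alt by apply Rle_0_sqr.
  f_equal; unfold vdot, vscal, Rsqr; simpl; ring.
Qed.

Lemma Rabs_fst_le u : Rabs (fst u) <= vnorm u.
Proof.
  rewrite <- sqrt_Rsqr_abs; apply sqrt_le_1_alt.
  unfold vdot, Rsqr; pose proof (Rle_0_sqr (snd u)); unfold Rsqr in *; lra.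
Qed.

Lemma Rabs_snd_le u : Rabs (snd u) <= vnorm u.
Proof.
  rewrite <- sqrt_Rsqr_abs; apply sqrt_le_1_alt.
  unfold vdot, Rsqr; pose proof (Rle_0_sqr (fst u)); unfold Rsqr in *; lra.
Qed.

Lemma Rabs_vdot_le u v : Rabs (vdot u v) <= vnorm u * vnorm v.
Proof.
  assert (Hcs : vdot u v ^ 2 <= (vnorm u * vnorm v) ^ 2).
  { rewrite Rpow_mult_distr, !vnorm_sq; unfold vdot.
    destruct u as [u1 u2], v as [v1 v2]; simpl.
    pose proof (pow2_ge_0 (u1 * v2 - u2 * v1)); nra. }
  assert (Hn : 0 <= vnorm u * vnorm v) by (apply Rmult_le_pos; apply vnorm_nonneg).
  rewrite <- (Rabs_pos_eq _ Hn); apply Rsqr_le_abs_0; unfold Rsqr; nra.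
Qed.

Lemma vnorm_add_le u v : vnorm (vadd u v) <= vnorm u + vnorm v.
Proof.
  pose proof (vnorm_nonneg u); pose proof (vnorm_nonneg v).
  assert (Hsq : vnorm (vadd u v) ^ 2 <= (vnorm u + vnorm v) ^ 2).
  { replace (vnorm (vadd u v) ^ 2) with (vnorm u ^ 2 + 2 * vdot u v + vnorm v ^ 2)
      by (rewrite !vnorm_sq; unfold vdot, vadd; simpl; ring).
    pose proof (Rle_abs (vdot u v)); pose proof (Rabs_vdot_le u v); nra. }
  apply Rsqr_incr_0; [unfold Rsqr; nra | apply vnorm_nonneg | lra].
Qed.

Lemma vnorm_sub_le u v : vnorm (vsub u v) <= vnorm u + vnorm v.
Proof.
  replace (vsub u v) with (vadd u (vscal (-1) v))
    by (unfold vsub, vadd, vscal; f_equal; simpl; ring).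
  rewrite <- (Rmult_1_l (vnorm v)), <- Rabs_m1, <- vnorm_scal; apply vnorm_add_le.
Qed.

Lemma vnorm_mid_le u v : vnorm (vmid u v) <= (vnorm u + vnorm v) / 2.
Proof.
  unfold vmid; rewrite vnorm_scal, Rabs_pos_eq by lra.
  pose proof (vnorm_add_le u v); lra.
Qed.

Lemma vnorm_sub_comm u v : vnorm (vsub u v) = vnorm (vsub v u).
Proof. unfold vnorm, vdot, vsub; simpl; f_equal; ring. Qed.

Lemma vnorm_rev_triang u v : Rabs (vnorm u - vnorm v) <= vnorm (vsub u v).
Proof.
  assert (H1 := vnorm_add_le (vsub u v) v); assert (H2 := vnorm_add_le (vsub v u) u).
  replace (vadd (vsub u v) v) with u in H1 by (unfold vadd, vsub; destruct u; simpl; f_equal; ring).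
  replace (vadd (vsub v u) u) with v in H2 by (unfold vadd, vsub; destruct v; simpl; f_equal; ring).
  rewrite <- vnorm_sub_comm in H2; apply Rabs_le; lra.
Qed.

Lemma young_lower h s sg t nd dl : 0 < h -> 0 < s -> 0 < sg -> Rabs nd <= dl ->
  - (h * sg * dl ^ 2 / s + h * s * t ^ 2 / (16 * sg)) <= h / 2 * t * nd.
Proof.
  intros Hh Hs Hsg Hnd.
  assert (H1 : - (h / 2 * Rabs t * dl) <= h / 2 * t * nd).
  { assert (Rabs (h / 2 * t * nd) <= h / 2 * Rabs t * dl).
    { rewrite !Rabs_mult, (Rabs_pos_eq (h / 2)) by lra.
      apply Rmult_le_compat_l; [apply Rmult_le_pos; [lra | apply Rabs_pos] | exact Hnd]. }
    pose proof (Rle_abs (- (h / 2 * t * nd))); rewrite Rabs_Ropp in *; lra. }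
  assert (H2 : h * sg * dl ^ 2 / s + h * s * t ^ 2 / (16 * sg) - h / 2 * Rabs t * dl
               = h * (4 * sg * dl - s * Rabs t) ^ 2 / (16 * sg * s))
    by (rewrite <- (pow2_abs t); field; lra).
  assert (0 <= h * (4 * sg * dl - s * Rabs t) ^ 2 / (16 * sg * s)).
  { apply Rmult_le_pos; [apply Rmult_le_pos; [lra | apply pow2_ge_0] | apply Rlt_le, Rinv_0_lt_compat; nra]. }
  lra.
Qed.

(* Young's inequality trades the arc term for part of the stiffness term plus [h s t^2 / (16 sg)];
   the latter is absorbed by the mass term because [1 / sg <= 3 sg / dt]. *)
Lemma coercivity_core h s sg dt xc P t nd dl M :
  0 < h -> 0 < s -> 0 < sg -> 0 < dt -> dt <= 3 * sg ^ 2 -> sg <= xc ->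
  t ^ 2 <= 2 * P -> Rabs nd <= dl -> h * s * sg / (6 * dt) * (P + t ^ 2) <= M ->
  h * s * sg / (8 * dt) * P <= M + h / 2 * t * nd + h * xc * dl ^ 2 / s.
Proof.
  intros Hh Hs Hsg Hdt Hdt3 Hxc Ht HP HM.
  assert (HY := young_lower h s sg t nd dl Hh Hs Hsg HP).
  assert (Hstiff : h * sg * dl ^ 2 / s <= h * xc * dl ^ 2 / s).
  { unfold Rdiv; apply Rmult_le_compat_r; [apply Rlt_le, Rinv_0_lt_compat; lra|].
    apply Rmult_le_compat_r; [apply pow2_ge_0 | apply Rmult_le_compat_l; lra]. }
  set (K := h * s * sg / dt).
  assert (HK : 0 < K) by (unfold K; apply Rdiv_lt_0_compat; [apply Rmult_lt_0_compat; [nra|] |]; lra).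
  assert (Hkin : h * s * t ^ 2 / (16 * sg) <= 3 / 16 * (K * t ^ 2)).
  { unfold K; replace (h * s * t ^ 2 / (16 * sg)) with (h * s * t ^ 2 / 16 * (1 / sg)) by (field; lra).
    replace (3 / 16 * (h * s * sg / dt * t ^ 2)) with (h * s * t ^ 2 / 16 * (3 * sg / dt)) by (field; lra).
    assert (0 <= h * s * t ^ 2 / 16).
    { unfold Rdiv; apply Rmult_le_pos; [| lra].
      apply Rmult_le_pos; [apply Rmult_le_pos; lra | apply pow2_ge_0]. }
    apply Rmult_le_compat_l; [assumption|].
    apply (Rmult_le_reg_r (sg * dt)); [nra|].
    replace (1 / sg * (sg * dt)) with dt by (field; lra).
    replace (3 * sg / dt * (sg * dt)) with (3 * sg ^ 2) by (field; lra); exact Hdt3. }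
  assert (HKt : K * t ^ 2 <= K * (2 * P)) by (apply Rmult_le_compat_l; lra).
  replace (h * s * sg / (6 * dt) * (P + t ^ 2)) with (K * P / 6 + K * t ^ 2 / 6) in HM by (unfold K; field; lra).
  replace (h * s * sg / (8 * dt) * P) with (K * P / 8) by (unfold K; field; lra).
  lra.
Qed.

Lemma Rabs_mul_le x y a b : Rabs x <= a -> Rabs y <= b -> Rabs (x * y) <= a * b.
Proof. intros; rewrite Rabs_mult; apply Rmult_le_compat; auto using Rabs_pos. Qed.

Lemma Rabs_vdot_bound u v mu nu : vnorm u <= mu -> vnorm v <= nu -> Rabs (vdot u v) <= mu * nu.
Proof.
  intros; eapply Rle_trans; [apply Rabs_vdot_le|].
  apply Rmult_le_compat; auto using vnorm_nonneg.
Qed.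

Lemma rpos_nonneg r : 0 <= rpos r.
Proof. apply Rmax_r. Qed.

Lemma hh_pos J : (1 <= J)%nat -> 0 < hh J.
Proof. intros; unfold hh; apply Rdiv_lt_0_compat; [lra | apply lt_0_INR; lia]. Qed.

Lemma q_step J j : (1 <= J)%nat -> (1 <= j)%nat -> q J j - q J (pred j) = hh J.
Proof.
  intros HJ Hj; unfold q, hh.
  replace j with (S (pred j)) at 1 by lia; rewrite S_INR.
  assert (0 < INR J) by (apply lt_0_INR; lia); field; lra.
Qed.

Lemma q_pred_le J j : (1 <= J)%nat -> (1 <= j)%nat -> q J (pred j) <= q J j.
Proof. intros HJ Hj; pose proof (q_step J j HJ Hj); pose proof (hh_pos J HJ); lra. Qed.

Lemma interp_eq J X j r t : (r - q J (pred j)) / hh J = t ->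
  interp J X j r = (fst (X (pred j)) + t * (fst (X j) - fst (X (pred j))),
                    snd (X (pred j)) + t * (snd (X j) - snd (X (pred j)))).
Proof. intros H; unfold interp, vadd, vscal, vsub; rewrite H; reflexivity. Qed.

Lemma interp_left J X j : (1 <= J)%nat -> interp J X j (q J (pred j)) = X (pred j).
Proof.
  intros HJ; rewrite (interp_eq J X j _ 0); [| unfold Rdiv; ring].
  destruct (X (pred j)); f_equal; simpl; ring.
Qed.

Lemma interp_right J X j : (1 <= J)%nat -> (1 <= j)%nat -> interp J X j (q J j) = X j.
Proof.
  intros HJ Hj; rewrite (interp_eq J X j _ 1).
  - destruct (X j); f_equal; simpl; ring.
  - rewrite q_step by assumption; pose proof (hh_pos J HJ); field; lra.
Qed.

Lemma interp_mid J X j : (1 <= J)%nat -> (1 <= j)%nat ->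
  interp J X j ((q J (pred j) + q J j) / 2) = vmid (X (pred j)) (X j).
Proof.
  intros HJ Hj; rewrite (interp_eq J X j _ (1 / 2)).
  - unfold vmid, vscal, vadd; f_equal; simpl; field.
  - replace ((q J (pred j) + q J j) / 2 - q J (pred j)) with ((q J j - q J (pred j)) / 2) by field.
    rewrite q_step by assumption; pose proof (hh_pos J HJ); field; lra.
Qed.

Lemma affine_interp_fst J X j : affine (fun r => fst (interp J X j r)).
Proof.
  exists (fst (X (pred j)) - q J (pred j) / hh J * (fst (X j) - fst (X (pred j)))),
         ((fst (X j) - fst (X (pred j))) / hh J).
  intro x; unfold interp, vadd, vscal, vsub; simpl; unfold Rdiv; ring.
Qed.

Lemma affine_interp_snd J X j : affine (fun r => snd (interp J X j r)).
Proof.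
  exists (snd (X (pred j)) - q J (pred j) / hh J * (snd (X j) - snd (X (pred j)))),
         ((snd (X j) - snd (X (pred j))) / hh J).
  intro x; unfold interp, vadd, vscal, vsub; simpl; unfold Rdiv; ring.
Qed.

Lemma quadratic_vdot_interp J X Y j : quadratic (fun r => vdot (interp J X j r) (interp J Y j r)).
Proof.
  apply quadratic_add; apply affine_mul;
    first [apply affine_interp_fst | apply affine_interp_snd].
Qed.

Lemma cubic_mass_integrand J X Y Z j K :
  cubic (fun r => fst (interp J X j r) * vdot (interp J Y j r) (interp J Z j r) * K).
Proof.
  apply (cubic_ext _ (fun r => vdot (interp J Y j r) (interp J Z j r) * (fst (interp J X j r) * K)));
    [intro; ring|].
  apply quadratic_mul_affine; [apply quadratic_vdot_interp | apply affine_mulr, affine_interp_fst].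
Qed.

Lemma cubic_arc_integrand J X j K : cubic (fun r => vdot (interp J X j r) e1 * K).
Proof.
  apply affine_cubic, (affine_ext _ (fun r => fst (interp J X j r) * K));
    [intro; unfold vdot, e1; simpl; ring | apply affine_mulr, affine_interp_fst].
Qed.

Lemma cubic_stiff_integrand J X j K K' : cubic (fun r => fst (interp J X j r) * K / K').
Proof.
  apply affine_cubic, (affine_ext _ (fun r => fst (interp J X j r) * (K / K')));
    [intro; unfold Rdiv; ring | apply affine_mulr, affine_interp_fst].
Qed.

Definition nsub (F G : nat -> vec) : nat -> vec := fun k => vsub (F k) (G k).
Definition ndot (J : nat) (F G : nat -> vec) : R := rsum0 J (fun k => vdot (F k) (G k)).
Definition nsq (J : nat) (F : nat -> vec) : R := ndot J F F.

Lemma nsq_nonneg J F : 0 <= nsq J F.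
Proof. apply rsum0_nonneg; intros; apply vdot_self_nonneg. Qed.

Lemma vnorm_le_sqrt_nsq J F k : (k <= J)%nat -> vnorm (F k) <= sqrt (nsq J F).
Proof.
  intros Hk; apply sqrt_le_1_alt.
  apply (rsum0_ge_term J (fun i => vdot (F i) (F i))); [intros; apply vdot_self_nonneg | exact Hk].
Qed.

Lemma nsq_le_of_vnorm_le J F a :
  (forall k, (k <= J)%nat -> vnorm (F k) <= a) -> nsq J F <= INR (S J) * a ^ 2.
Proof.
  intros H; unfold nsq, ndot; rewrite <- rsum0_const; apply rsum0_le.
  intros k Hk; rewrite <- vnorm_sq; pose proof (vnorm_nonneg (F k)); specialize (H k Hk).
  apply pow_incr; lra.
Qed.

Lemma ndot_sub_l J F G Z : ndot J (nsub F G) Z = ndot J F Z - ndot J G Z.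
Proof.
  unfold ndot; rewrite <- rsum0_sub; apply rsum0_ext; intros.
  unfold nsub, vsub, vdot; simpl; ring.
Qed.

Lemma ndot_sub_scal_l J W Z w eta :
  ndot J (fun k => vsub (W k) (vscal w (Z k))) eta = ndot J W eta - w * ndot J Z eta.
Proof.
  unfold ndot; rewrite <- rsum0_scal, <- rsum0_sub; apply rsum0_ext; intros.
  unfold vsub, vscal, vdot; simpl; ring.
Qed.

Lemma nsq_sub_scal J W Z w :
  nsq J (fun k => vsub (W k) (vscal w (Z k))) = nsq J W - 2 * w * ndot J Z W + w ^ 2 * nsq J Z.
Proof.
  unfold nsq, ndot; rewrite <- !rsum0_scal, <- rsum0_sub, <- rsum0_add; apply rsum0_ext; intros.
  unfold vsub, vscal, vdot; simpl; ring.
Qed.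

Lemma vnorm_le_abs_coords u : vnorm u <= Rabs (fst u) + Rabs (snd u).
Proof.
  pose proof (Rabs_pos (fst u)); pose proof (Rabs_pos (snd u)).
  apply Rsqr_incr_0; [| apply vnorm_nonneg | lra].
  rewrite Rsqr_pow2, vnorm_sq; unfold vdot.
  pose proof (Rsqr_abs (fst u)); pose proof (Rsqr_abs (snd u)); unfold Rsqr in *; nra.
Qed.

Lemma geometric_tail_bound (u : nat -> R) A r : 0 <= r < 1 ->
  (forall n, Rabs (u (S n) - u n) <= A * r ^ n) ->
  forall n m, Rabs (u (n + m)%nat - u n) <= A * r ^ n / (1 - r).
Proof.
  intros Hr H n m.
  assert (HA : 0 <= A) by (specialize (H O); pose proof (Rabs_pos (u 1%nat - u O)); simpl in H; lra).
  assert (Hm : Rabs (u (n + m)%nat - u n) <= A * r ^ n * (1 - r ^ m) / (1 - r)).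
  { induction m.
    - rewrite Nat.add_0_r, Rminus_diag, Rabs_R0; simpl; right; field; lra.
    - replace (n + S m)%nat with (S (n + m)) by lia.
      replace (u (S (n + m)) - u n) with ((u (S (n + m)) - u (n + m)%nat) + (u (n + m)%nat - u n))
        by ring.
      eapply Rle_trans; [apply Rabs_triang|].
      specialize (H (n + m)%nat); rewrite pow_add in H.
      apply Rle_trans with (A * (r ^ n * r ^ m) + A * r ^ n * (1 - r ^ m) / (1 - r)); [lra|].
      right; simpl; field; lra. }
  eapply Rle_trans; [exact Hm|].
  unfold Rdiv; apply Rmult_le_compat_r; [apply Rlt_le, Rinv_0_lt_compat; lra|].
  assert (0 <= r ^ m) by (apply pow_le; lra).
  assert (0 <= A * r ^ n) by (apply Rmult_le_pos; [lra | apply pow_le; lra]).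
  nra.
Qed.

Lemma pow_eventually_lt r e : 0 <= r < 1 -> 0 < e -> exists N, forall n, (N <= n)%nat -> r ^ n < e.
Proof.
  intros Hr He; destruct (pow_lt_1_zero r ltac:(rewrite Rabs_pos_eq; lra) e He) as [N HN].
  exists N; intros n Hn; specialize (HN n Hn); rewrite Rabs_pos_eq in HN by (apply pow_le; lra).
  exact HN.
Qed.

Lemma geometric_limit_bound (u : nat -> R) A r : 0 <= r < 1 ->
  (forall n, Rabs (u (S n) - u n) <= A * r ^ n) ->
  forall n, Rabs (u n - Lim_seq u) <= A * r ^ n / (1 - r).
Proof.
  intros Hr H.
  assert (HA : 0 <= A) by (specialize (H O); pose proof (Rabs_pos (u 1%nat - u O)); simpl in H; lra).
  assert (Htail := geometric_tail_bound u A r Hr H).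
  assert (Hex : ex_finite_lim_seq u).
  { apply ex_lim_seq_cauchy_corr; intros eps.
    destruct (pow_eventually_lt r (eps * (1 - r) / (2 * (A + 1))) Hr) as [N HN].
    { apply Rdiv_lt_0_compat; [apply Rmult_lt_0_compat; [apply cond_pos | lra] | lra]. }
    exists N; intros n m Hn Hm.
    assert (H1 := Htail N (n - N)%nat); assert (H2 := Htail N (m - N)%nat).
    replace (N + (n - N))%nat with n in H1 by lia; replace (N + (m - N))%nat with m in H2 by lia.
    specialize (HN N (le_n N)); pose proof (pow_le r N ltac:(lra)).
    assert (A * r ^ N / (1 - r) < eps / 2).
    { apply Rmult_lt_reg_r with (1 - r); [lra|].
      replace (A * r ^ N / (1 - r) * (1 - r)) with (A * r ^ N) by (field; lra).
      apply Rle_lt_trans with ((A + 1) * r ^ N); [nra|].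
      apply Rlt_le_trans with ((A + 1) * (eps * (1 - r) / (2 * (A + 1))));
        [apply Rmult_lt_compat_l; lra | right; field; lra]. }
    replace (u n - u m) with ((u n - u N) - (u m - u N)) by ring.
    eapply Rle_lt_trans; [apply Rabs_triang|]; rewrite Rabs_Ropp; lra. }
  destruct Hex as [l Hl]; rewrite (is_lim_seq_unique _ _ Hl); simpl; intros n.
  assert (Hd : is_lim_seq (fun m => Rabs (u (n + m)%nat - u n)) (Rabs (l - u n))).
  { apply (is_lim_seq_abs _ (l - u n)), is_lim_seq_minus'; [|apply is_lim_seq_const].
    apply (is_lim_seq_ext (fun m => u (m + n)%nat)); [intros; f_equal; lia|].
    apply is_lim_seq_incr_n; exact Hl. }
  rewrite Rabs_minus_sym.
  apply (is_lim_seq_le _ _ _ _ (Htail n) Hd (is_lim_seq_const _)).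
Qed.

Lemma Rabs_le_geometric_eq0 x K r : 0 <= r < 1 -> (forall n, Rabs x <= K * r ^ n) -> x = 0.
Proof.
  intros Hr H.
  assert (Hl : is_lim_seq (fun n => K * r ^ n) 0).
  { replace (Finite 0) with (Rbar_mult K 0) by (simpl; f_equal; ring).
    apply is_lim_seq_scal_l, is_lim_seq_geom; rewrite Rabs_pos_eq; lra. }
  assert (Hle := is_lim_seq_le _ _ _ _ H (is_lim_seq_const (Rabs x)) Hl); simpl in Hle.
  apply Rabs_eq_0; pose proof (Rabs_pos x); lra.
Qed.

Lemma sqrt_pow x n : 0 <= x -> sqrt (x ^ n) = sqrt x ^ n.
Proof. intros Hx; induction n; simpl; [apply sqrt_1 | rewrite sqrt_mult_alt, IHn by assumption; reflexivity]. Qed.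

Section ContractionFixedPoint.

Variables (J : nat) (T : (nat -> vec) -> (nat -> vec)) (c : R).
Hypothesis Hc : 0 <= c < 1.
Hypothesis HT : forall D E, nsq J (nsub (T D) (T E)) <= c * nsq J (nsub D E).
Hypothesis HT_beyond : forall D k, (J < k)%nat -> T D k = (0, 0).

Definition iterate (n : nat) : nat -> vec := Nat.iter n T (fun _ => (0, 0)).

Definition iterate_limit (k : nat) : vec :=
  (real (Lim_seq (fun n => fst (iterate n k))), real (Lim_seq (fun n => snd (iterate n k)))).

Lemma iterate_step_nsq n :
  nsq J (nsub (iterate (S n)) (iterate n)) <= c ^ n * nsq J (nsub (iterate 1) (iterate 0)).
Proof.
  induction n; [rewrite pow_O, Rmult_1_l; apply Rle_refl|].
  eapply Rle_trans; [apply HT|]; simpl; rewrite Rmult_assoc.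
  apply Rmult_le_compat_l; [lra | exact IHn].
Qed.

Lemma iterate_limit_rate : exists A, forall n k, (k <= J)%nat ->
  vnorm (vsub (iterate n k) (iterate_limit k)) <= A * sqrt c ^ n.
Proof.
  set (r := sqrt c); set (B := sqrt (nsq J (nsub (iterate 1) (iterate 0)))).
  assert (Hr : 0 <= r < 1)
    by (split; [apply sqrt_pos | unfold r; rewrite <- sqrt_1; apply sqrt_lt_1_alt; lra]).
  assert (Hstep : forall n k, (k <= J)%nat ->
    vnorm (vsub (iterate (S n) k) (iterate n k)) <= B * r ^ n).
  { intros n k Hk; eapply Rle_trans; [apply (vnorm_le_sqrt_nsq J (nsub _ _) k Hk)|].
    unfold B, r; rewrite <- sqrt_pow by lra; rewrite Rmult_comm, <- sqrt_mult_alt.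
    - apply sqrt_le_1_alt, iterate_step_nsq.
    - apply pow_le; lra. }
  exists (2 * (B / (1 - r))); intros n k Hk.
  eapply Rle_trans; [apply vnorm_le_abs_coords|]; unfold vsub, iterate_limit; simpl.
  replace (2 * (B / (1 - r)) * r ^ n) with (B * r ^ n / (1 - r) + B * r ^ n / (1 - r)) by (field; lra).
  apply Rplus_le_compat.
  - apply (geometric_limit_bound (fun n => fst (iterate n k)) B r Hr); intros m.
    eapply Rle_trans; [apply (Rabs_fst_le (vsub _ _)) | apply (Hstep m k Hk)].
  - apply (geometric_limit_bound (fun n => snd (iterate n k)) B r Hr); intros m.
    eapply Rle_trans; [apply (Rabs_snd_le (vsub _ _)) | apply (Hstep m k Hk)].
Qed.

Lemma iterate_beyond n k : (J < k)%nat -> iterate n k = (0, 0).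
Proof. intros Hk; destruct n; [reflexivity | apply HT_beyond, Hk]. Qed.

Lemma contraction_fixed_point : exists D, T D = D.
Proof.
  destruct iterate_limit_rate as [A HA]; exists iterate_limit.
  assert (Hr : 0 <= sqrt c < 1)
    by (split; [apply sqrt_pos | rewrite <- sqrt_1; apply sqrt_lt_1_alt; lra]).
  apply functional_extensionality; intros k.
  destruct (Nat.le_gt_cases k J) as [Hk|Hk].
  2:{ rewrite HT_beyond by exact Hk; unfold iterate_limit.
      rewrite (Lim_seq_ext _ (fun _ => 0)), (Lim_seq_ext (fun n => snd _) (fun _ => 0)), Lim_seq_const;
        [reflexivity | |]; intros n; rewrite iterate_beyond by exact Hk; reflexivity. }
  set (K := sqrt (c * (INR (S J) * A ^ 2)) + A * sqrt c).
  assert (Hclose : forall n, vnorm (vsub (T iterate_limit k) (iterate_limit k)) <= K * sqrt c ^ n).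
  { intros n.
    replace (vsub (T iterate_limit k) (iterate_limit k))
      with (vadd (vsub (T iterate_limit k) (iterate (S n) k)) (vsub (iterate (S n) k) (iterate_limit k)))
      by (unfold vadd, vsub; simpl; f_equal; ring).
    eapply Rle_trans; [apply vnorm_add_le|]; unfold K; rewrite Rmult_plus_distr_r.
    apply Rplus_le_compat; [| replace (A * sqrt c * sqrt c ^ n) with (A * sqrt c ^ S n) by (simpl; ring); apply HA, Hk].
    eapply Rle_trans; [apply (vnorm_le_sqrt_nsq J (nsub (T iterate_limit) (T (iterate n))) k Hk)|].
    rewrite <- (sqrt_pow2 (sqrt c ^ n)) by (apply pow_le; lra).
    rewrite <- sqrt_mult_alt by (apply Rmult_le_pos; [lra | apply Rmult_le_pos; [apply pos_INR | apply pow2_ge_0]]).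
    apply sqrt_le_1_alt; eapply Rle_trans; [apply HT|].
    replace (c * (INR (S J) * A ^ 2) * (sqrt c ^ n) ^ 2) with (c * (INR (S J) * (A * sqrt c ^ n) ^ 2)) by ring.
    apply Rmult_le_compat_l; [lra|]; apply nsq_le_of_vnorm_le.
    intros i Hi; unfold nsub; rewrite vnorm_sub_comm; apply HA, Hi. }
  destruct (T iterate_limit k) as [t1 t2], (iterate_limit k) as [l1 l2].
  f_equal; apply Rminus_diag_uniq, (Rabs_le_geometric_eq0 _ K (sqrt c) Hr); intros n.
  - eapply Rle_trans; [apply (Rabs_fst_le (vsub (t1, t2) (l1, l2))) | apply (Hclose n)].
  - eapply Rle_trans; [apply (Rabs_snd_le (vsub (t1, t2) (l1, l2))) | apply (Hclose n)].
Qed.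

End ContractionFixedPoint.

Definition bc_constrain (t : bctype) (v : vec) : vec :=
  match t with BcD => (0, 0) | Bc2 => (fst v, 0) | Bc0 | Bc1 => (0, snd v) end.

(* Orthogonal projection (for [ndot]) onto underline V^h_partial; in the periodic case
   the two copies of the node q_0 = q_J are averaged. *)
Definition proj_Vhd (per : bool) (bc : bool -> bctype) (J : nat) (Y : nat -> vec) (k : nat) : vec :=
  if (J <? k)%nat then (0, 0)
  else if per then (if orb (k =? 0)%nat (k =? J)%nat then vmid (Y O) (Y J) else Y k)
  else if (k =? 0)%nat then bc_constrain (bc false) (Y O)
  else if (k =? J)%nat then bc_constrain (bc true) (Y J)
  else Y k.

Section Projection.

Variables (per : bool) (bc : bool -> bctype) (J : nat).
Hypothesis HJ : (1 <= J)%nat.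

Let J_ltb_J : (J <? J)%nat = false.
Proof. apply Nat.ltb_ge; lia. Qed.
Let J_ltb_0 : (J <? 0)%nat = false.
Proof. apply Nat.ltb_ge; lia. Qed.
Let J_eqb_0 : (J =? 0)%nat = false.
Proof. apply Nat.eqb_neq; lia. Qed.

Lemma proj_Vhd_in Y : inVhd per bc J (proj_Vhd per bc J Y).
Proof.
  split.
  - intros ->; unfold proj_Vhd; rewrite J_ltb_J, J_ltb_0, J_eqb_0, !Nat.eqb_refl; reflexivity.
  - intros p; unfold inbd; repeat split; intros [Hper Hb]; subst per; destruct p;
      unfold bnode, proj_Vhd; rewrite ?J_ltb_J, ?J_ltb_0, ?J_eqb_0, ?Nat.eqb_refl; simpl;
      rewrite Hb; unfold vdot, e1, e2; simpl; first [reflexivity | ring].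
Qed.

Lemma proj_Vhd_beyond Y k : (J < k)%nat -> proj_Vhd per bc J Y k = (0, 0).
Proof. intros Hk; unfold proj_Vhd; apply Nat.ltb_lt in Hk; rewrite Hk; reflexivity. Qed.

Lemma proj_Vhd_sub Y Z : proj_Vhd per bc J (nsub Y Z) = nsub (proj_Vhd per bc J Y) (proj_Vhd per bc J Z).
Proof.
  apply functional_extensionality; intros k; unfold proj_Vhd, nsub.
  destruct (J <? k)%nat; [unfold vsub; simpl; f_equal; ring|].
  destruct per.
  - destruct (orb (k =? 0)%nat (k =? J)%nat); [|reflexivity].
    unfold vmid, vscal, vadd, vsub; simpl; f_equal; field.
  - destruct (k =? 0)%nat; [|destruct (k =? J)%nat; [|reflexivity]];
      destruct (bc _); unfold bc_constrain, vsub; simpl; f_equal; ring.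
Qed.

Lemma interior_node_eqb k : (1 <= k <= pred J)%nat -> (J <? k)%nat = false /\ (k =? 0)%nat = false /\ (k =? J)%nat = false.
Proof. intros Hk; repeat split; [apply Nat.ltb_ge | apply Nat.eqb_neq | apply Nat.eqb_neq]; lia. Qed.

Lemma rsum0_split_ends f : rsum0 J f = f O + rsum (pred J) f + f J.
Proof. destruct J as [|J']; [lia|]; unfold rsum0; simpl; ring. Qed.

Lemma proj_Vhd_nsq_le Y : nsq J (proj_Vhd per bc J Y) <= nsq J Y.
Proof.
  unfold nsq, ndot; destruct per.
  - rewrite !rsum0_split_ends.
    rewrite (rsum_ext _ (fun k => vdot (proj_Vhd true bc J Y k) _) (fun k => vdot (Y k) (Y k)))
      by (intros k Hk; unfold proj_Vhd; destruct (interior_node_eqb k Hk) as [-> [-> ->]]; reflexivity).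
    unfold proj_Vhd; rewrite J_ltb_J, J_ltb_0, J_eqb_0, !Nat.eqb_refl; simpl.
    destruct (Y O) as [a1 a2], (Y J) as [b1 b2]; unfold vmid, vscal, vadd, vdot; simpl.
    pose proof (pow2_ge_0 (a1 - b1)); pose proof (pow2_ge_0 (a2 - b2)); nra.
  - apply rsum0_le; intros k Hk; unfold proj_Vhd.
    replace (J <? k)%nat with false by (symmetry; apply Nat.ltb_ge; lia).
    destruct (Nat.eqb_spec k 0) as [->|]; [|destruct (Nat.eqb_spec k J) as [->|]; [|lra]];
      destruct (bc _), (Y _); unfold bc_constrain, vdot; simpl; nra.
Qed.

Lemma bc_constrain_vdot p Y eta : inVhd false bc J eta ->
  vdot (bc_constrain (bc p) Y) (eta (bnode J p)) = vdot Y (eta (bnode J p)).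
Proof.
  intros [_ Hc]; destruct (Hc p) as [C0 [C1 [C2 CD]]]; unfold inbd in *.
  destruct (bc p); destruct Y, (eta (bnode J p)); unfold bc_constrain, vdot, e1, e2 in *; simpl in *.
  - injection (CD (conj eq_refl eq_refl)) as -> ->; ring.
  - specialize (C0 (conj eq_refl eq_refl)); nra.
  - specialize (C1 (conj eq_refl eq_refl)); nra.
  - specialize (C2 (conj eq_refl eq_refl)); nra.
Qed.

Lemma proj_Vhd_ndot Y eta : inVhd per bc J eta -> ndot J (proj_Vhd per bc J Y) eta = ndot J Y eta.
Proof.
  intros Heta; unfold ndot; destruct per.
  - rewrite !rsum0_split_ends.
    rewrite (rsum_ext _ (fun k => vdot (proj_Vhd true bc J Y k) _) (fun k => vdot (Y k) (eta k)))
      by (intros k Hk; unfold proj_Vhd; destruct (interior_node_eqb k Hk) as [-> [-> ->]]; reflexivity).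
    unfold proj_Vhd; rewrite J_ltb_J, J_ltb_0, J_eqb_0, !Nat.eqb_refl; simpl.
    rewrite <- (proj1 Heta eq_refl).
    destruct (Y O), (Y J), (eta O); unfold vmid, vscal, vadd, vdot; simpl; field.
  - apply rsum0_ext; intros k Hk; unfold proj_Vhd.
    replace (J <? k)%nat with false by (symmetry; apply Nat.ltb_ge; lia).
    destruct (Nat.eqb_spec k 0) as [->|]; [apply (bc_constrain_vdot false); assumption|].
    destruct (Nat.eqb_spec k J) as [->|]; [apply (bc_constrain_vdot true); assumption | reflexivity].
Qed.

End Projection.

Lemma nsq_le_of_ndot_le J Y W C : 0 <= C ->
  (forall Z, Rabs (ndot J Y Z) <= C * sqrt (nsq J W) * sqrt (nsq J Z)) ->
  nsq J Y <= C ^ 2 * nsq J W.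
Proof.
  intros HC H; specialize (H Y); change (ndot J Y Y) with (nsq J Y) in H.
  rewrite Rabs_pos_eq in H by apply nsq_nonneg.
  assert (Hy : nsq J Y = sqrt (nsq J Y) ^ 2) by (symmetry; apply pow2_sqrt, nsq_nonneg).
  assert (Hw : nsq J W = sqrt (nsq J W) ^ 2) by (symmetry; apply pow2_sqrt, nsq_nonneg).
  set (y := sqrt (nsq J Y)) in *; set (w := sqrt (nsq J W)) in *.
  assert (0 <= y) by apply sqrt_pos; assert (0 <= w) by apply sqrt_pos.
  rewrite Hy in H |- *; rewrite Hw.
  assert (y <= C * w) by (destruct (Req_dec y 0) as [->|]; [nra | apply (Rmult_le_reg_r y); nra]).
  rewrite <- Rpow_mult_distr; apply pow_incr; lra.
Qed.

(* Zarantonello's argument: with the step [kap / C^2], [D |-> P (D - kap / C^2 * G D)] is a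
   contraction, and its fixed point is a zero of [G] against the test space. *)
Section StronglyMonotoneZero.

Variables (per : bool) (bc : bool -> bctype) (J : nat) (G : (nat -> vec) -> (nat -> vec)) (kap C : R).
Hypothesis HJ : (1 <= J)%nat.
Hypothesis Hkap : 0 < kap.
Hypothesis HC : 0 < C.
Hypothesis G_monotone : forall D E, kap * nsq J (nsub D E) <= ndot J (nsub (G D) (G E)) (nsub D E).
Hypothesis G_lipschitz : forall D E, nsq J (nsub (G D) (G E)) <= C ^ 2 * nsq J (nsub D E).

Definition gradient_step (D : nat -> vec) : nat -> vec :=
  proj_Vhd per bc J (fun k => vsub (D k) (vscal (kap / C ^ 2) (G D k))).

Lemma gradient_step_contraction D E :
  nsq J (nsub (gradient_step D) (gradient_step E)) <= Rmax 0 (1 - kap ^ 2 / C ^ 2) * nsq J (nsub D E).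
Proof.
  unfold gradient_step; rewrite <- proj_Vhd_sub.
  eapply Rle_trans; [apply proj_Vhd_nsq_le; exact HJ|].
  set (W := nsub D E); set (Z := nsub (G D) (G E)); set (w := kap / C ^ 2).
  replace (nsub _ _) with (fun k => vsub (W k) (vscal w (Z k)))
    by (apply functional_extensionality; intros k; unfold W, Z, nsub, vsub, vscal; simpl; f_equal; ring).
  rewrite nsq_sub_scal.
  assert (HW := nsq_nonneg J W); assert (HC2 : 0 < C ^ 2) by (apply pow_lt; lra).
  assert (Hw : 0 <= w) by (unfold w; apply Rlt_le, Rdiv_lt_0_compat; lra).
  assert (H1 : w * (kap * nsq J W) <= w * ndot J Z W) by (apply Rmult_le_compat_l; [lra | apply G_monotone]).
  assert (H2 : w ^ 2 * nsq J Z <= w ^ 2 * (C ^ 2 * nsq J W))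
    by (apply Rmult_le_compat_l; [apply pow2_ge_0 | apply G_lipschitz]).
  assert (H3 : (1 - kap ^ 2 / C ^ 2) * nsq J W <= Rmax 0 (1 - kap ^ 2 / C ^ 2) * nsq J W)
    by (apply Rmult_le_compat_r; [exact HW | apply Rmax_r]).
  replace (w ^ 2 * (C ^ 2 * nsq J W)) with (kap ^ 2 / C ^ 2 * nsq J W) in H2 by (unfold w; field; lra).
  replace (w * (kap * nsq J W)) with (kap ^ 2 / C ^ 2 * nsq J W) in H1 by (unfold w; field; lra).
  lra.
Qed.

Lemma strongly_monotone_zero :
  exists D, inVhd per bc J D /\ forall eta, inVhd per bc J eta -> ndot J (G D) eta = 0.
Proof.
  assert (Hc : 0 <= Rmax 0 (1 - kap ^ 2 / C ^ 2) < 1).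
  { split; [apply Rmax_l | apply Rmax_lub_lt; [lra|]].
    assert (0 < kap ^ 2 / C ^ 2) by (apply Rdiv_lt_0_compat; apply pow_lt; lra); lra. }
  destruct (contraction_fixed_point J gradient_step _ Hc gradient_step_contraction)
    as [D HD]; [intros; apply proj_Vhd_beyond; assumption|].
  exists D; split; [rewrite <- HD; apply proj_Vhd_in, HJ|].
  intros eta Heta.
  assert (H := proj_Vhd_ndot per bc J HJ (fun k => vsub (D k) (vscal (kap / C ^ 2) (G D k))) eta Heta).
  fold (gradient_step D) in H; rewrite HD, ndot_sub_scal_l in H.
  assert (kap / C ^ 2 <> 0) by (apply Rgt_not_eq, Rdiv_lt_0_compat; [| apply pow_lt]; lra).
  apply (Rmult_eq_reg_l (kap / C ^ 2)); lra.
Qed.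

End StronglyMonotoneZero.

Definition assemble (J : nat) (L R : nat -> vec) (b0 bJ : vec) (k : nat) : vec :=
  vadd (vadd (if (k <? J)%nat then L (S k) else (0, 0)) (if (1 <=? k)%nat then R k else (0, 0)))
       (vadd (if (k =? 0)%nat then b0 else (0, 0)) (if (k =? J)%nat then bJ else (0, 0))).

Lemma ndot_assemble J L R b0 bJ eta : (1 <= J)%nat ->
  ndot J (assemble J L R b0 bJ) eta
  = rsum J (fun j => vdot (L j) (eta (pred j)) + vdot (R j) (eta j)) + vdot b0 (eta O) + vdot bJ (eta J).
Proof.
  intros HJ; unfold ndot, assemble.
  rewrite (rsum0_ext J _ (fun k =>
      (vdot (if (k <? J)%nat then L (S k) else (0, 0)) (eta k)
       + vdot (if (1 <=? k)%nat then R k else (0, 0)) (eta k))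
      + (vdot (if (k =? 0)%nat then b0 else (0, 0)) (eta k)
         + vdot (if (k =? J)%nat then bJ else (0, 0)) (eta k))))
    by (intros; rewrite !vdot_add_l; reflexivity).
  rewrite !rsum0_add, rsum_add.
  assert (EL : rsum0 J (fun k => vdot (if (k <? J)%nat then L (S k) else (0, 0)) (eta k))
               = rsum J (fun j => vdot (L j) (eta (pred j)))).
  { destruct J as [|J']; [lia|]; rewrite rsum0_S, Nat.ltb_irrefl, vdot0l, Rplus_0_r.
    rewrite (rsum0_ext J' _ (fun k => vdot (L (S k)) (eta k)))
      by (intros k Hk; replace (k <? S J')%nat with true by (symmetry; apply Nat.ltb_lt; lia); reflexivity).
    rewrite rsum0_as_rsum; apply rsum_ext; intros j Hj; replace (S (pred j)) with j by lia; reflexivity. }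
  assert (ER : rsum0 J (fun k => vdot (if (1 <=? k)%nat then R k else (0, 0)) (eta k))
               = rsum J (fun j => vdot (R j) (eta j))).
  { unfold rsum0; simpl; rewrite vdot0l, Rplus_0_l.
    apply rsum_ext; intros [|j] Hj; [lia | reflexivity]. }
  assert (E0 : rsum0 J (fun k => vdot (if (k =? 0)%nat then b0 else (0, 0)) (eta k)) = vdot b0 (eta O)).
  { unfold rsum0; simpl; rewrite (rsum_ext _ _ (fun _ => 0)), rsum_const0; [ring|].
    intros [|j] Hj; [lia | apply vdot0l]. }
  assert (EJ : rsum0 J (fun k => vdot (if (k =? J)%nat then bJ else (0, 0)) (eta k)) = vdot bJ (eta J)).
  { destruct J as [|J']; [lia|]; rewrite rsum0_S, Nat.eqb_refl.
    rewrite (rsum0_ext J' _ (fun _ => 0)); [unfold rsum0; rewrite rsum_const0; ring|].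
    intros k Hk; replace (k =? S J')%nat with false by (symmetry; apply Nat.eqb_neq; lia); apply vdot0l. }
  rewrite EL, ER, E0, EJ; ring.
Qed.

Section Scheme.

Variables (lumped per : bool) (bc : bool -> bctype) (varrho : bool -> R) (J : nat) (Xm : nat -> vec) (dt : R).

Definition Xnext (D : nat -> vec) (i : nat) : vec := vadd (Xm i) (D i).

Definition len_m (j : nat) : R := vnorm (deriv J Xm j).
Definition rad_l (j : nat) : R := fst (Xm (pred j)).
Definition rad_r (j : nat) : R := fst (Xm j).
Definition rad_c (j : nat) : R := (rad_l j + rad_r j) / 2.

(* Element contributions to the second equation for the test values [a], [b] at the ends of
   element [j], with kappa^{m+1} = D / dt; in the exact variant the cubic integrand is
   integrated by Simpson's rule. *)
Definition mass_elem (D : nat -> vec) (j : nat) (a b : vec) : R :=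
  if lumped then hh J / 2 * (len_m j / dt) * (rad_r j * vdot (D j) b + rad_l j * vdot (D (pred j)) a)
  else hh J / 6 * (len_m j / dt) *
         (rad_l j * vdot (D (pred j)) a + 4 * rad_c j * vdot (vmid (D (pred j)) (D j)) (vmid a b)
          + rad_r j * vdot (D j) b).
Definition arc_elem (D : nat -> vec) (j : nat) (a b : vec) : R :=
  hh J / 2 * (fst a + fst b) * vnorm (deriv J (Xnext D) j).
Definition stiff_elem (D : nat -> vec) (j : nat) (a b : vec) : R :=
  hh J * rad_c j * vdot (deriv J (Xnext D) j) (vscal (1 / hh J) (vsub b a)) / len_m j.
Definition form_elem (D : nat -> vec) (j : nat) (a b : vec) : R :=
  mass_elem D j a b + arc_elem D j a b + stiff_elem D j a b.

Definition form_bdry (D : nat -> vec) (a0 aJ : vec) : R :=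
  bsum per bc Bc1 (fun p => varrho p * vdot (Xm (bnode J p)) e1 * vdot (if p then aJ else a0) e2)
  + bsum per bc Bc2 (fun p => vdot (vadd (vscal (rpos (varrho p)) (Xnext D (bnode J p)))
                                      (vscal (rneg (varrho p)) (Xm (bnode J p)))) e1
                              * vdot (if p then aJ else a0) e1).

Definition residual (D eta : nat -> vec) : R :=
  rsum J (fun j => form_elem D j (eta (pred j)) (eta j)) + form_bdry D (eta O) (eta J).

Definition residual_vec (D : nat -> vec) : nat -> vec :=
  assemble J (fun j => (form_elem D j e1 (0, 0), form_elem D j e2 (0, 0)))
             (fun j => (form_elem D j (0, 0) e1, form_elem D j (0, 0) e2))
             (form_bdry D e1 (0, 0), form_bdry D e2 (0, 0))
             (form_bdry D (0, 0) e1, form_bdry D (0, 0) e2).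

Lemma form_elem_linear D j a b :
  form_elem D j a b = vdot (form_elem D j e1 (0, 0), form_elem D j e2 (0, 0)) a
                      + vdot (form_elem D j (0, 0) e1, form_elem D j (0, 0) e2) b.
Proof.
  unfold form_elem, mass_elem, arc_elem, stiff_elem.
  set (d := deriv J (Xnext D) j); set (n := vnorm d); clearbody n d.
  destruct a as [a1 a2], b as [b1 b2], d as [d1 d2]; unfold Rdiv.
  set (i1 := / dt); set (i2 := / len_m j); set (i3 := / hh J); clearbody i1 i2 i3.
  destruct lumped; unfold vdot, vscal, vsub, vmid, vadd, e1, e2; simpl; field.
Qed.

Lemma form_bdry_linear D a0 aJ :
  form_bdry D a0 aJ = vdot (form_bdry D e1 (0, 0), form_bdry D e2 (0, 0)) a0
                      + vdot (form_bdry D (0, 0) e1, form_bdry D (0, 0) e2) aJ.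
Proof.
  unfold form_bdry, bsum; destruct a0, aJ.
  destruct per, (bc false), (bc true); unfold vdot, e1, e2; simpl; ring.
Qed.

Lemma residual_eq_ndot (HJ : (1 <= J)%nat) D eta : residual D eta = ndot J (residual_vec D) eta.
Proof.
  unfold residual_vec; rewrite ndot_assemble by exact HJ; unfold residual.
  rewrite form_bdry_linear, (rsum_ext J _ _ (fun j _ => form_elem_linear D j _ _)); ring.
Qed.

Lemma weak_form_eq_residual (HJ : (1 <= J)%nat) (D eta : nat -> vec) :
  ip_sharp lumped J (fun j rho => fst (interp J Xm j rho) *
         vdot (interp J (fun i => vscal (1 / dt) (D i)) j rho) (interp J eta j rho) * vnorm (deriv J Xm j))
  + ip_exact J (fun j rho => vdot (interp J eta j rho) e1 * vnorm (deriv J (fun i => vadd (Xm i) (D i)) j))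
  + ip_exact J (fun j rho => fst (interp J Xm j rho) *
         vdot (deriv J (fun i => vadd (Xm i) (D i)) j) (deriv J eta j) / vnorm (deriv J Xm j))
  = rsum J (fun j => form_elem D j (eta (pred j)) (eta j)).
Proof.
  assert (Hh := hh_pos J HJ).
  unfold form_elem; rewrite !rsum_add; f_equal; [f_equal|].
  - unfold ip_sharp, mass_elem; destruct lumped.
    + unfold ip_lumped; rewrite <- rsum_scal; apply rsum_ext; intros j Hj.
      rewrite !interp_right, !interp_left by lia.
      unfold vdot, vscal, rad_l, rad_r, len_m; simpl; unfold Rdiv; ring.
    + unfold ip_exact; apply rsum_ext; intros j Hj.
      rewrite Rint_simpson, q_step by (apply cubic_mass_integrand || lia).
      rewrite !interp_right, !interp_left, !interp_mid by lia.
      unfold vdot, vscal, vmid, vadd, rad_c, rad_l, rad_r, len_m; simpl; unfold Rdiv.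
      set (idt := / dt); field.
  - unfold ip_exact; apply rsum_ext; intros j Hj.
    rewrite Rint_simpson, q_step by (apply cubic_arc_integrand || lia).
    rewrite !interp_right, !interp_left, !interp_mid by lia.
    unfold arc_elem, Xnext, vdot, vscal, vmid, vadd, e1; simpl; field.
  - unfold ip_exact; apply rsum_ext; intros j Hj.
    rewrite Rint_simpson, q_step by (apply cubic_stiff_integrand || lia).
    rewrite !interp_right, !interp_left, !interp_mid by lia.
    unfold stiff_elem, Xnext, rad_c, rad_l, rad_r, len_m.
    change (vscal (1 / hh J) (vsub (eta j) (eta (pred j)))) with (deriv J eta j).
    set (K := vdot _ _); unfold Rdiv; set (ilen := / vnorm (deriv J Xm j)).
    unfold vmid, vscal, vadd; simpl; field.
Qed.

Lemma deriv_nsub D E j : deriv J (nsub D E) j = vsub (deriv J (Xnext D) j) (deriv J (Xnext E) j).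
Proof. unfold deriv, Xnext, nsub, vsub, vscal, vadd; simpl; f_equal; ring. Qed.

Lemma form_elem_sub D E j a b :
  form_elem D j a b - form_elem E j a b
  = mass_elem (nsub D E) j a b
    + hh J / 2 * (fst a + fst b) * (vnorm (deriv J (Xnext D) j) - vnorm (deriv J (Xnext E) j))
    + hh J * rad_c j * vdot (deriv J (nsub D E) j) (vscal (1 / hh J) (vsub b a)) / len_m j.
Proof.
  unfold form_elem, mass_elem, arc_elem, stiff_elem; rewrite deriv_nsub.
  destruct lumped; unfold nsub, vmid, vdot, vsub, vscal, vadd; simpl; unfold Rdiv; ring.
Qed.

Lemma mass_elem_self_ge (HJ : (1 <= J)%nat) W j sg :
  0 < dt -> 0 < len_m j -> 0 <= sg -> sg <= rad_l j -> sg <= rad_r j ->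
  hh J * len_m j * sg / (6 * dt)
    * (vdot (W (pred j)) (W (pred j)) + vdot (W j) (W j) + (fst (W (pred j)) + fst (W j)) ^ 2)
  <= mass_elem W j (W (pred j)) (W j).
Proof.
  intros Hdt Hs Hsg Hl Hr; assert (Hh := hh_pos J HJ).
  set (c := hh J * len_m j / dt).
  assert (Hc : 0 <= c) by (unfold c; apply Rlt_le, Rdiv_lt_0_compat; [nra | lra]).
  assert (Hrc : rad_c j >= sg) by (unfold rad_c; lra).
  unfold mass_elem; destruct (W (pred j)) as [a1 a2], (W j) as [b1 b2].
  unfold vdot, vmid, vscal, vadd; cbn [fst snd].
  assert (Hsum : forall x y, 0 <= x * x + y * y) by (intros; nra).
  destruct lumped.
  - replace (hh J / 2 * (len_m j / dt) * _) with
        (c * ((rad_r j * (b1 * b1 + b2 * b2) + rad_l j * (a1 * a1 + a2 * a2)) / 2)) by (unfold c; field; lra).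
    replace (hh J * len_m j * sg / (6 * dt) * _) with
        (c * (sg * (a1 * a1 + a2 * a2 + (b1 * b1 + b2 * b2) + (a1 + b1) ^ 2) / 6)) by (unfold c; field; lra).
    apply Rmult_le_compat_l; [exact Hc|].
    pose proof (Rmult_le_compat_r _ _ _ (Hsum a1 a2) Hl); pose proof (Rmult_le_compat_r _ _ _ (Hsum b1 b2) Hr).
    assert (sg * (a1 + b1) ^ 2 <= sg * (2 * (a1 * a1 + a2 * a2 + (b1 * b1 + b2 * b2))))
      by (apply Rmult_le_compat_l; [exact Hsg | pose proof (pow2_ge_0 (a1 - b1)); nra]).
    lra.
  - replace (hh J / 6 * (len_m j / dt) * _) with
        (c * ((rad_l j * (a1 * a1 + a2 * a2) + rad_c j * ((a1 + b1) * (a1 + b1) + (a2 + b2) * (a2 + b2))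
               + rad_r j * (b1 * b1 + b2 * b2)) / 6)) by (unfold c; field; lra).
    replace (hh J * len_m j * sg / (6 * dt) * _) with
        (c * (sg * (a1 * a1 + a2 * a2 + (b1 * b1 + b2 * b2) + (a1 + b1) ^ 2) / 6)) by (unfold c; field; lra).
    apply Rmult_le_compat_l; [exact Hc|].
    pose proof (Rmult_le_compat_r _ _ _ (Hsum a1 a2) Hl); pose proof (Rmult_le_compat_r _ _ _ (Hsum b1 b2) Hr).
    pose proof (Rmult_le_compat_r _ _ _ (Hsum (a1 + b1) (a2 + b2)) (Rge_le _ _ Hrc)).
    assert (sg * (a1 + b1) ^ 2 <= sg * ((a1 + b1) * (a1 + b1) + (a2 + b2) * (a2 + b2)))
      by (apply Rmult_le_compat_l; [exact Hsg | pose proof (pow2_ge_0 (a2 + b2)); nra]).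
    lra.
Qed.

Lemma form_elem_coercive (HJ : (1 <= J)%nat) D E j sg :
  (1 <= j)%nat -> 0 < dt -> 0 < sg -> dt <= 3 * sg ^ 2 ->
  0 < len_m j -> sg <= rad_l j -> sg <= rad_r j ->
  let W := nsub D E in
  hh J * len_m j * sg / (8 * dt) * (vdot (W (pred j)) (W (pred j)) + vdot (W j) (W j))
  <= form_elem D j (W (pred j)) (W j) - form_elem E j (W (pred j)) (W j).
Proof.
  intros Hj Hdt Hsg Hdt3 Hs Hl Hr W; rewrite form_elem_sub; fold W.
  change (vscal (1 / hh J) (vsub (W j) (W (pred j)))) with (deriv J W j).
  rewrite <- (vnorm_sq (deriv J W j)).
  apply (coercivity_core _ _ _ _ _ _ (fst (W (pred j)) + fst (W j))); try assumption.
  - apply hh_pos, HJ.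
  - unfold rad_c; lra.
  - destruct (W (pred j)) as [a1 a2], (W j) as [b1 b2]; unfold vdot; simpl.
    pose proof (pow2_ge_0 (a1 - b1)); nra.
  - unfold W; rewrite deriv_nsub; apply vnorm_rev_triang.
  - apply mass_elem_self_ge; auto; lra.
Qed.

Lemma form_bdry_sub D E a0 aJ :
  form_bdry D a0 aJ - form_bdry E a0 aJ
  = bsum per bc Bc2 (fun p => rpos (varrho p) * fst (nsub D E (bnode J p)) * fst (if p then aJ else a0)).
Proof.
  unfold form_bdry, bsum, Xnext; destruct per, (bc false), (bc true);
    unfold vdot, vadd, vscal, e1, e2, nsub, vsub; simpl; ring.
Qed.

Lemma form_bdry_monotone D E :
  0 <= form_bdry D (nsub D E O) (nsub D E J) - form_bdry E (nsub D E O) (nsub D E J).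
Proof.
  rewrite form_bdry_sub; unfold bsum, bnode; set (W := nsub D E).
  assert (H : forall p k, 0 <= rpos (varrho p) * fst (W k) * fst (W k))
    by (intros; rewrite Rmult_assoc; apply Rmult_le_pos; [apply rpos_nonneg | apply Rle_0_sqr]).
  pose proof (H false O); pose proof (H true J).
  destruct per, (bc false), (bc true); cbv beta iota; lra.
Qed.

Lemma residual_strongly_monotone (HJ : (1 <= J)%nat) sg :
  0 < dt -> 0 < sg -> dt <= 3 * sg ^ 2 ->
  (forall j, (1 <= j <= J)%nat -> 0 < len_m j /\ sg <= rad_l j /\ sg <= rad_r j) ->
  exists kap, 0 < kap /\
    forall D E, kap * nsq J (nsub D E) <= residual D (nsub D E) - residual E (nsub D E).
Proof.
  intros Hdt Hsg Hdt3 Hel; assert (Hh := hh_pos J HJ).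
  destruct (exists_pos_lower_bound J (fun j => hh J * len_m j * sg / (8 * dt))) as [kap [Hkap Hkapj]].
  { intros j Hj; destruct (Hel j Hj) as [Hs _].
    apply Rdiv_lt_0_compat; [apply Rmult_lt_0_compat; [nra|] |]; lra. }
  exists kap; split; [exact Hkap|]; intros D E; set (W := nsub D E).
  set (PW := fun j => vdot (W (pred j)) (W (pred j)) + vdot (W j) (W j)).
  assert (Hnsq : kap * nsq J W <= kap * rsum J PW).
  { apply Rmult_le_compat_l; [lra|].
    apply (rsum0_le_elements J (fun k => vdot (W k) (W k))); [exact HJ | intros; apply vdot_self_nonneg]. }
  assert (Helem : kap * rsum J PW
                  <= rsum J (fun j => form_elem D j (W (pred j)) (W j) - form_elem E j (W (pred j)) (W j))).
  { rewrite <- rsum_scal; apply rsum_le; intros j Hj; destruct (Hel j Hj) as [Hs [Hl Hr]].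
    eapply Rle_trans; [| apply (form_elem_coercive HJ D E j sg); try assumption; lia].
    apply Rmult_le_compat_r; [| apply Hkapj, Hj].
    apply Rplus_le_le_0_compat; apply vdot_self_nonneg. }
  pose proof (form_bdry_monotone D E) as Hbdry; fold W in Hbdry.
  unfold residual; rewrite rsum_sub in Helem; lra.
Qed.

Lemma vnorm_deriv_le (HJ : (1 <= J)%nat) F j mu :
  vnorm (F (pred j)) <= mu -> vnorm (F j) <= mu -> vnorm (deriv J F j) <= 2 * mu / hh J.
Proof.
  intros Hp Hj; assert (Hh := hh_pos J HJ); unfold deriv.
  rewrite vnorm_scal, Rabs_pos_eq by (apply Rlt_le, Rdiv_lt_0_compat; lra).
  pose proof (vnorm_sub_le (F j) (F (pred j))).
  replace (2 * mu / hh J) with (1 / hh J * (2 * mu)) by (field; lra).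
  apply Rmult_le_compat_l; [apply Rlt_le, Rdiv_lt_0_compat|]; lra.
Qed.

Lemma mass_elem_abs_le (HJ : (1 <= J)%nat) W j a b mu nu : 0 < dt -> 0 <= len_m j ->
  vnorm (W (pred j)) <= mu -> vnorm (W j) <= mu -> vnorm a <= nu -> vnorm b <= nu ->
  Rabs (mass_elem W j a b)
  <= hh J * (len_m j / dt) * (Rabs (rad_l j) + Rabs (rad_r j) + Rabs (rad_c j)) * (mu * nu).
Proof.
  intros Hdt Hs Hwp Hw Ha Hb; assert (Hh := hh_pos J HJ).
  set (c := hh J * (len_m j / dt)).
  assert (Hc : 0 <= c) by (apply Rmult_le_pos; [lra | apply Rmult_le_pos; [lra | apply Rlt_le, Rinv_0_lt_compat; lra]]).
  assert (Hmn : 0 <= mu * nu)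
    by (apply Rmult_le_pos; eapply Rle_trans; [apply vnorm_nonneg | eassumption | apply vnorm_nonneg | eassumption]).
  assert (Tl := Rabs_mul_le _ _ _ _ (Rle_refl (Rabs (rad_l j))) (Rabs_vdot_bound _ _ _ _ Hwp Ha)).
  assert (Tr := Rabs_mul_le _ _ _ _ (Rle_refl (Rabs (rad_r j))) (Rabs_vdot_bound _ _ _ _ Hw Hb)).
  assert (Hmid : vnorm (vmid (W (pred j)) (W j)) <= mu) by (pose proof (vnorm_mid_le (W (pred j)) (W j)); lra).
  assert (Hmid' : vnorm (vmid a b) <= nu) by (pose proof (vnorm_mid_le a b); lra).
  assert (Tc := Rabs_mul_le _ _ _ _ (Rle_refl (Rabs (4 * rad_c j))) (Rabs_vdot_bound _ _ _ _ Hmid Hmid')).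
  rewrite (Rabs_mult 4 (rad_c j)), (Rabs_pos_eq 4) in Tc by lra.
  assert (0 <= Rabs (rad_c j) * (mu * nu)) by (apply Rmult_le_pos; [apply Rabs_pos | exact Hmn]).
  assert (0 <= Rabs (rad_l j) * (mu * nu)) by (apply Rmult_le_pos; [apply Rabs_pos | exact Hmn]).
  assert (0 <= Rabs (rad_r j) * (mu * nu)) by (apply Rmult_le_pos; [apply Rabs_pos | exact Hmn]).
  rewrite Rmult_assoc; unfold mass_elem; destruct lumped.
  - replace (hh J / 2 * (len_m j / dt) * _)
      with (c * ((rad_r j * vdot (W j) b + rad_l j * vdot (W (pred j)) a) * / 2)) by (unfold c, Rdiv; ring).
    rewrite Rabs_mult, (Rabs_pos_eq c) by exact Hc; apply Rmult_le_compat_l; [exact Hc|].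
    rewrite Rabs_mult, (Rabs_pos_eq (/ 2)) by lra.
    pose proof (Rabs_triang (rad_r j * vdot (W j) b) (rad_l j * vdot (W (pred j)) a)); lra.
  - replace (hh J / 6 * (len_m j / dt) * _)
      with (c * ((rad_l j * vdot (W (pred j)) a + 4 * rad_c j * vdot (vmid (W (pred j)) (W j)) (vmid a b)
                  + rad_r j * vdot (W j) b) * / 6)) by (unfold c, Rdiv; ring).
    rewrite Rabs_mult, (Rabs_pos_eq c) by exact Hc; apply Rmult_le_compat_l; [exact Hc|].
    rewrite Rabs_mult, (Rabs_pos_eq (/ 6)) by lra.
    pose proof (Rabs_triang (rad_l j * vdot (W (pred j)) a + 4 * rad_c j * vdot (vmid (W (pred j)) (W j)) (vmid a b))
                            (rad_r j * vdot (W j) b)).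
    pose proof (Rabs_triang (rad_l j * vdot (W (pred j)) a) (4 * rad_c j * vdot (vmid (W (pred j)) (W j)) (vmid a b))).
    lra.
Qed.

Definition lip_elem (j : nat) : R :=
  hh J * (len_m j / dt) * (Rabs (rad_l j) + Rabs (rad_r j) + Rabs (rad_c j))
  + 2 + 4 * Rabs (rad_c j) / (hh J * len_m j).

Lemma form_elem_lipschitz (HJ : (1 <= J)%nat) D E Z j mu nu : 0 < dt -> 0 < len_m j ->
  vnorm (nsub D E (pred j)) <= mu -> vnorm (nsub D E j) <= mu ->
  vnorm (Z (pred j)) <= nu -> vnorm (Z j) <= nu ->
  Rabs (form_elem D j (Z (pred j)) (Z j) - form_elem E j (Z (pred j)) (Z j)) <= lip_elem j * (mu * nu).
Proof.
  intros Hdt Hs Hwp Hw Hzp Hz; assert (Hh := hh_pos J HJ).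
  rewrite form_elem_sub; change (vscal (1 / hh J) (vsub (Z j) (Z (pred j)))) with (deriv J Z j).
  assert (HdW := vnorm_deriv_le HJ _ _ _ Hwp Hw); assert (HdZ := vnorm_deriv_le HJ _ _ _ Hzp Hz).
  assert (Hmass := mass_elem_abs_le HJ (nsub D E) j _ _ mu nu Hdt (Rlt_le _ _ Hs) Hwp Hw Hzp Hz).
  assert (Harc : Rabs (hh J / 2 * (fst (Z (pred j)) + fst (Z j))
                       * (vnorm (deriv J (Xnext D) j) - vnorm (deriv J (Xnext E) j))) <= 2 * (mu * nu)).
  { rewrite Rmult_assoc, Rabs_mult, (Rabs_pos_eq (hh J / 2)) by lra.
    apply Rle_trans with (hh J / 2 * ((2 * nu) * (2 * mu / hh J))); [| right; field; lra].
    apply Rmult_le_compat_l; [lra|]; apply Rabs_mul_le.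
    - pose proof (Rabs_fst_le (Z (pred j))); pose proof (Rabs_fst_le (Z j)).
      pose proof (Rabs_triang (fst (Z (pred j))) (fst (Z j))); lra.
    - eapply Rle_trans; [apply vnorm_rev_triang|]; rewrite <- deriv_nsub; exact HdW. }
  assert (Hstiff : Rabs (hh J * rad_c j * vdot (deriv J (nsub D E) j) (deriv J Z j) / len_m j)
                   <= 4 * Rabs (rad_c j) / (hh J * len_m j) * (mu * nu)).
  { replace (hh J * rad_c j * vdot (deriv J (nsub D E) j) (deriv J Z j) / len_m j)
      with (hh J / len_m j * (rad_c j * vdot (deriv J (nsub D E) j) (deriv J Z j))) by (field; lra).
    rewrite Rabs_mult, (Rabs_pos_eq (hh J / len_m j)) by (apply Rlt_le, Rdiv_lt_0_compat; lra).
    apply Rle_trans with (hh J / len_m j * (Rabs (rad_c j) * ((2 * mu / hh J) * (2 * nu / hh J))));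
      [| right; field; lra].
    apply Rmult_le_compat_l; [apply Rlt_le, Rdiv_lt_0_compat; lra|].
    apply Rabs_mul_le; [apply Rle_refl | apply Rabs_vdot_bound; assumption]. }
  unfold lip_elem; eapply Rle_trans; [apply Rabs_triang|].
  pose proof (Rabs_triang (mass_elem (nsub D E) j (Z (pred j)) (Z j))
               (hh J / 2 * (fst (Z (pred j)) + fst (Z j))
                * (vnorm (deriv J (Xnext D) j) - vnorm (deriv J (Xnext E) j)))).
  lra.
Qed.

Lemma form_bdry_lipschitz D E Z mu nu :
  vnorm (nsub D E O) <= mu -> vnorm (nsub D E J) <= mu -> vnorm (Z O) <= nu -> vnorm (Z J) <= nu ->
  Rabs (form_bdry D (Z O) (Z J) - form_bdry E (Z O) (Z J))
  <= (rpos (varrho false) + rpos (varrho true)) * (mu * nu).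
Proof.
  intros HW0 HWJ HZ0 HZJ; rewrite form_bdry_sub; unfold bsum, bnode.
  assert (H : forall p k, vnorm (nsub D E k) <= mu -> vnorm (Z k) <= nu ->
            Rabs (rpos (varrho p) * fst (nsub D E k) * fst (Z k)) <= rpos (varrho p) * (mu * nu)).
  { intros p k Hw Hz; rewrite Rmult_assoc, Rabs_mult, (Rabs_pos_eq (rpos _)) by apply rpos_nonneg.
    apply Rmult_le_compat_l; [apply rpos_nonneg|].
    apply Rabs_mul_le; eapply Rle_trans; [apply Rabs_fst_le | exact Hw | apply Rabs_fst_le | exact Hz]. }
  assert (H0 := H false O HW0 HZ0); assert (HJ' := H true J HWJ HZJ).
  assert (Hmn : 0 <= mu * nu) by (apply Rmult_le_pos; eapply Rle_trans;
    [apply vnorm_nonneg | exact HW0 | apply vnorm_nonneg | exact HZ0]).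
  pose proof (Rmult_le_pos _ _ (rpos_nonneg (varrho false)) Hmn);
    pose proof (Rmult_le_pos _ _ (rpos_nonneg (varrho true)) Hmn).
  pose proof (Rabs_triang (rpos (varrho false) * fst (nsub D E O) * fst (Z O))
                          (rpos (varrho true) * fst (nsub D E J) * fst (Z J))).
  destruct per, (bc false), (bc true); cbv beta iota; rewrite ?Rplus_0_l, ?Rplus_0_r, ?Rabs_R0; lra.
Qed.

Lemma residual_lipschitz (HJ : (1 <= J)%nat) D E Z : 0 < dt ->
  (forall j, (1 <= j <= J)%nat -> 0 < len_m j) ->
  Rabs (residual D Z - residual E Z)
  <= (rsum J lip_elem + rpos (varrho false) + rpos (varrho true))
     * sqrt (nsq J (nsub D E)) * sqrt (nsq J Z).
Proof.
  intros Hdt Hs.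
  set (mu := sqrt (nsq J (nsub D E))); set (nu := sqrt (nsq J Z)).
  assert (HW : forall k, (k <= J)%nat -> vnorm (nsub D E k) <= mu) by (intros; apply vnorm_le_sqrt_nsq; assumption).
  assert (HZ : forall k, (k <= J)%nat -> vnorm (Z k) <= nu) by (intros; apply vnorm_le_sqrt_nsq; assumption).
  replace (residual D Z - residual E Z)
    with (rsum J (fun j => form_elem D j (Z (pred j)) (Z j) - form_elem E j (Z (pred j)) (Z j))
          + (form_bdry D (Z O) (Z J) - form_bdry E (Z O) (Z J)))
    by (unfold residual; rewrite rsum_sub; ring).
  eapply Rle_trans; [apply Rabs_triang|].
  assert (Helem : Rabs (rsum J (fun j => form_elem D j (Z (pred j)) (Z j) - form_elem E j (Z (pred j)) (Z j)))
                  <= rsum J lip_elem * (mu * nu)).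
  { rewrite Rmult_comm, <- rsum_scal; eapply Rle_trans; [apply rsum_abs|].
    apply rsum_le; intros j Hj; rewrite Rmult_comm.
    apply form_elem_lipschitz; auto; [apply HW | apply HW | apply HZ | apply HZ]; lia. }
  assert (Hbdry := form_bdry_lipschitz D E Z mu nu (HW O (Nat.le_0_l J)) (HW J (le_n J))
                                      (HZ O (Nat.le_0_l J)) (HZ J (le_n J))).
  replace ((rsum J lip_elem + rpos (varrho false) + rpos (varrho true)) * mu * nu)
    with (rsum J lip_elem * (mu * nu) + (rpos (varrho false) + rpos (varrho true)) * (mu * nu)) by ring.
  lra.
Qed.

Lemma residual_zero (HJ : (1 <= J)%nat) sg :
  0 < dt -> 0 < sg -> dt <= 3 * sg ^ 2 ->
  (forall j, (1 <= j <= J)%nat -> 0 < len_m j /\ sg <= rad_l j /\ sg <= rad_r j) ->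
  exists D, inVhd per bc J D /\ forall eta, inVhd per bc J eta -> residual D eta = 0.
Proof.
  intros Hdt Hsg Hdt3 Hel.
  destruct (residual_strongly_monotone HJ sg Hdt Hsg Hdt3 Hel) as [kap [Hkap Hmono]].
  set (C := Rmax 1 (rsum J lip_elem + rpos (varrho false) + rpos (varrho true))).
  assert (HC : 1 <= C) by apply Rmax_l.
  destruct (strongly_monotone_zero per bc J residual_vec kap C HJ Hkap ltac:(lra)) as [D [HD Hzero]].
  - intros D E; rewrite ndot_sub_l, <- !residual_eq_ndot by exact HJ; apply Hmono.
  - intros D E; apply nsq_le_of_ndot_le; [lra|]; intros Z.
    rewrite ndot_sub_l, <- !residual_eq_ndot by exact HJ.
    eapply Rle_trans; [apply residual_lipschitz; [exact HJ | exact Hdt | intros; apply Hel; assumption]|].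
    rewrite !Rmult_assoc; apply Rmult_le_compat_r; [apply Rmult_le_pos; apply sqrt_pos | apply Rmax_r].
  - exists D; split; [exact HD|]; intros eta Heta; rewrite residual_eq_ndot by exact HJ; apply Hzero, Heta.
Qed.

Lemma form_bdry_eq_bsum D eta :
  form_bdry D (eta O) (eta J) =
  bsum per bc Bc1 (fun p => varrho p * vdot (Xm (bnode J p)) e1 * vdot (eta (bnode J p)) e2)
  + bsum per bc Bc2 (fun p =>
      vdot (vadd (vscal (rpos (varrho p)) ((fun i => vadd (Xm i) (D i)) (bnode J p)))
                 (vscal (rneg (varrho p)) (Xm (bnode J p)))) e1
      * vdot (eta (bnode J p)) e1).
Proof. unfold form_bdry, bsum; destruct per, (bc false), (bc true); reflexivity. Qed.

End Scheme.

Lemma interp_diff_quotient J X D c j rho :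
  vscal c (vsub (interp J (fun i => vadd (X i) (D i)) j rho) (interp J X j rho))
  = interp J (fun i => vscal c (D i)) j rho.
Proof. unfold interp, vadd, vscal, vsub; simpl; f_equal; ring. Qed.

Lemma radial_lower_bound per bc J Xm dt : (1 <= J)%nat -> (forall p, ~ inbd per bc Bc0 p) ->
  assumptionA per bc J Xm -> (exists mn, is_min_sq J Xm mn /\ dt < 3 * mn) ->
  exists sg, 0 < sg /\ dt <= 3 * sg ^ 2 /\
    forall j, (1 <= j <= J)%nat -> 0 < len_m J Xm j /\ sg <= rad_l Xm j /\ sg <= rad_r Xm j.
Proof.
  intros HJ Hno0 [Hlen Hpos] [mn [[[j0 [rho0 [Hj0 [Hr0 Hm0]]]] Hmin] Hdt]].
  assert (Hnd0 : forall rho, ~ in_d0 per bc rho) by (intros rho [p [Hp _]]; exact (Hno0 p Hp)).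
  assert (Hmn : 0 < mn) by (rewrite Hm0; apply pow_lt, Rgt_lt, Hpos; auto).
  assert (Hpt : forall j rho, (1 <= j <= J)%nat -> q J (pred j) <= rho <= q J j ->
            sqrt mn <= vdot (interp J Xm j rho) e1).
  { intros j rho Hj Hr; specialize (Hpos j rho Hj Hr (Hnd0 rho)); specialize (Hmin j rho Hj Hr).
    apply Rsqr_incr_0; [rewrite !Rsqr_pow2, pow2_sqrt; lra | apply sqrt_pos | lra]. }
  exists (sqrt mn); split; [apply sqrt_lt_R0, Hmn|]; split; [rewrite pow2_sqrt; lra|].
  intros j Hj; split; [apply Hlen, Hj|].
  assert (Hq := q_pred_le J j HJ ltac:(lia)).
  assert (Hl := Hpt j (q J (pred j)) Hj (conj (Rle_refl _) Hq)).
  assert (Hr := Hpt j (q J j) Hj (conj Hq (Rle_refl _))).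
  rewrite interp_left in Hl by exact HJ; rewrite interp_right in Hr by (exact HJ || lia).
  unfold rad_l, rad_r, vdot, e1 in *; simpl in *; split; lra.
Qed.

Theorem theorem4p5
  (lumped : bool) (per : bool) (bc : bool -> bctype) (varrho : bool -> R)
  (J : nat) (Xm : nat -> vec) (dt : R) :
  (forall p : bool, Rabs (varrho p) <= 1) ->
  (3 <= J)%nat ->
  (forall p : bool, ~ inbd per bc Bc0 p) ->
  inVh per J Xm ->
  assumptionA per bc J Xm ->
  0 < dt ->
  (exists mn, is_min_sq J Xm mn /\ dt < 3 * mn) ->
  exists dX kappa : nat -> vec,
    inVhd per bc J dX /\ inVh per J kappa /\
    let X1 := fun i => vadd (Xm i) (dX i) in
    (forall chi : nat -> vec, inVh per J chi ->
       ip_sharp lumped J (fun j rho =>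
         fst (interp J Xm j rho) *
         vdot (vscal (1 / dt) (vsub (interp J X1 j rho) (interp J Xm j rho)))
              (interp J chi j rho) * vnorm (deriv J Xm j))
       = ip_sharp lumped J (fun j rho =>
         fst (interp J Xm j rho) *
         vdot (interp J kappa j rho) (interp J chi j rho) * vnorm (deriv J Xm j))) /\
    (forall eta : nat -> vec, inVhd per bc J eta ->
       ip_sharp lumped J (fun j rho =>
         fst (interp J Xm j rho) *
         vdot (interp J kappa j rho) (interp J eta j rho) * vnorm (deriv J Xm j))
       + ip_exact J (fun j rho =>
         vdot (interp J eta j rho) e1 * vnorm (deriv J X1 j))
       + ip_exact J (fun j rho =>
         fst (interp J Xm j rho) *
         vdot (deriv J X1 j) (deriv J eta j) / vnorm (deriv J Xm j))
       = - bsum per bc Bc1 (fun p =>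
             varrho p * vdot (Xm (bnode J p)) e1 * vdot (eta (bnode J p)) e2)
         - bsum per bc Bc2 (fun p =>
             vdot (vadd (vscal (rpos (varrho p)) (X1 (bnode J p)))
                        (vscal (rneg (varrho p)) (Xm (bnode J p)))) e1
             * vdot (eta (bnode J p)) e1)).
Proof.
  intros _ HJ3 Hno0 _ HA Hdt Hmin.
  assert (HJ : (1 <= J)%nat) by lia.
  destruct (radial_lower_bound per bc J Xm dt HJ Hno0 HA Hmin) as [sg [Hsg [Hdt3 Hel]]].
  destruct (residual_zero lumped per bc varrho J Xm dt HJ sg Hdt Hsg Hdt3 Hel) as [D [HD Hzero]].
  exists D, (fun i => vscal (1 / dt) (D i)); split; [exact HD|]; split.
  { intros Hper; rewrite (proj1 HD Hper); reflexivity. }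
  cbv zeta; split.
  - intros chi _; do 4 f_equal; apply functional_extensionality; intros j;
      apply functional_extensionality; intros rho; rewrite interp_diff_quotient; reflexivity.
  - intros eta Heta; rewrite weak_form_eq_residual by exact HJ.
    specialize (Hzero eta Heta); unfold residual in Hzero; rewrite form_bdry_eq_bsum in Hzero; lra.
Qed.
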